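(* Let $X$ be a multitype Galton–Watson tree with offspring kernel $\mathbb Q$ on a finite alphabet $\mathcal X$. Assume that $(\tilde L_X,M_X)$, conditioned on $\{|T|=n\}$, satisfies a large deviation principle (as $n\to\infty$, speed $n$) in $\mathcal M_s$ with the convex, good rate function $$\widetilde J(\varpi,\nu)=\begin{cases}H(\nu\,\|\,\nu_1\otimes\mathbb Q)&\text{if }\varpi_2=\nu_1,\\ \infty&\text{otherwise.}\end{cases}$$ Then $(\tilde L_X,M_X)$ conditioned on $\{|T|=n\}$ satisfies the large deviation principle in $\tilde{\mathcal M}(\mathcal X\times\mathcal X)\times\mathcal M(\mathcal X\times\mathcal X^* )$ with the convex, good rate function $J(\varpi,\nu)=H(\nu\,\|\,\nu_1\otimes\mathbb Q)$ if $(\varpi,\nu)$ is sub-consistent and $\varpi_2=\nu_1$, and $J(\varpi,\nu)=\infty$ otherwise.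
   Context: $\mathcal X^*=\bigcup_{n\ge0}\{n\}\times\mathcal X^n$, elements $c=(n,a_1,\dots,a_n)$, $m(a,c)=\sum_{i}\mathbf 1\{a_i=a\}$. The multitype Galton–Watson tree: root type from an initial law $\mu$; each vertex $v$ of type $a$ independently has children number and types $C(v)=(N(v),X_1(v),\dots,X_{N(v)}(v))\sim\mathbb Q\{\cdot\mid a\}$. $M_X(a,c)=\frac1{|T|}\sum_v\delta_{(X(v),C(v))}(a,c)$; $\tilde L_X(a,b)=\frac1{|T|}\sum_{e\in E}\delta_{(X(e_1),X(e_2))}(a,b)$ (edges oriented away from the root, $e_1$ parent, $e_2$ child). $\tilde{\mathcal M}(\mathcal X\times\mathcal X)$: finite measures; $\mathcal M(\mathcal X\times\mathcal X^* )$: probability measures $\nu$ with $\int n\,d\nu<\infty$; weak topology. $(\varpi,\nu)$ is sub-consistent if $\varpi(a,b)\ge\sum_c m(b,c)\nu(a,c)$ for all $a,b$; $\mathcal M_s$ is the set of sub-consistent pairs, with the subspace topology. $\nu_1$: $\mathcal X$-marginal of $\nu$; $\varpi_2$: second marginal of $\varpi$; $\nu_1\otimes\mathbb Q(a,c)=\nu_1(a)\mathbb Q\{c\mid a\}$; $H$ relative entropy. *)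

From HB Require Import structures.
From mathcomp Require Import all_boot all_order all_algebra.
From mathcomp Require Import all_classical all_reals.
From mathcomp Require Import ereal topology sequences esum exp.
From Stdlib Require List.
Set Implicit Arguments. Unset Strict Implicit. Unset Printing Implicit Defensive.
Import Order.TTheory GRing.Theory Num.Theory.
Local Open Scope classical_set_scope.
Local Open Scope ring_scope.

Section Trees.
Variable X : finType.

(* [Node a ts] : a vertex of type a whose ordered children subtrees are ts *)
Inductive tree := Node of X & seq tree.

Definition root_type (t : tree) : X := let: Node a _ := t in a.
Definition subtrees (t : tree) : seq tree := let: Node _ ts := t in ts.

Fixpoint tree_enc (t : tree) : GenTree.tree X :=
  let: Node a ts := t in GenTree.Node 0 (GenTree.Leaf a :: map tree_enc ts).

Fixpoint tree_dec (u : GenTree.tree X) : option tree :=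
  match u with
  | GenTree.Node 0 (GenTree.Leaf a :: us) => Some (Node a (pmap tree_dec us))
  | _ => None
  end.

Fixpoint tree_ind' (P : tree -> Prop)
  (H : forall a ts, (forall t, List.In t ts -> P t) -> P (Node a ts)) (t : tree) : P t :=
  match t with
  | Node a ts => H a ts ((fix F (l : seq tree) : forall t, List.In t l -> P t :=
       match l with
       | [::] => fun t (i : List.In t [::]) => False_ind _ i
       | u :: l' => fun t (i : List.In t (u :: l')) =>
           match i with
           | or_introl e => eq_ind u P (tree_ind' H u) t e
           | or_intror i' => F l' t i'
           end
       end) ts)
  end.

Lemma tree_encK : pcancel tree_enc tree_dec.
Proof.
elim/tree_ind' => a ts IH /=; congr (Some (Node a _)).
elim: ts IH => //= u ts IHts IH.
by rewrite IH /=; [rewrite IHts // => t Ht; apply: IH; right | left].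
Qed.

HB.instance Definition _ := Countable.copy tree (pcan_type tree_encK).

Fixpoint tsize (t : tree) : nat :=
  let: Node _ ts := t in (sumn (map tsize ts)).+1.

(* number of vertices v with X(v) = a and C(v) = c (C(v) coded as the
   sequence of children types, which determines N(v)) *)
Fixpoint cntM (t : tree) (a : X) (c : seq X) : nat :=
  let: Node b ts := t in
  ((b == a) && (map root_type ts == c)) + sumn (map (fun u => cntM u a c) ts).

Fixpoint cntL (t : tree) (a b : X) : nat :=
  let: Node a' ts := t in
  (a' == a) * count (fun u => root_type u == b) ts
  + sumn (map (fun u => cntL u a b) ts).
End Trees.

Section Model.
Variable R : realType.
Variable X : finType.

(* a point (varpi, nu) : varpi a finite measure on X x X (a function on the
   finite set), nu a measure on the countable set X x X^* *)
Definition Pt := ((X -> X -> R) * (X -> seq X -> R))%type.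

Definition stat (t : tree X) : Pt :=
  (fun a b => (cntL t a b)%:R / (tsize t)%:R,
   fun a c => (cntM t a c)%:R / (tsize t)%:R).

(* P{ X = t } for the multitype GW tree with initial law mu and kernel Q,
   where Q a c = Q{ c | a } *)
Fixpoint gw_weight (Q : X -> seq X -> R) (t : tree X) : R :=
  let: Node a ts := t in
  Q a (map (@root_type X) ts) *
  (fix prodw (l : seq (tree X)) : R :=
     if l is u :: l' then gw_weight Q u * prodw l' else 1) ts.

Definition gw_prob (mu : X -> R) (Q : X -> seq X -> R) (t : tree X) : R :=
  mu (root_type t) * gw_weight Q t.

Definition condLaw (mu : X -> R) (Q : X -> seq X -> R) (n : nat) (A : set Pt) : R :=
  fine (\esum_(t in [set t | tsize t = n /\ A (stat t)]) (gw_prob mu Q t)%:E)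
  / fine (\esum_(t in [set t | tsize t = n]) (gw_prob mu Q t)%:E).

Definition esumXS (f : X -> seq X -> R) : \bar R :=
  \esum_(x in [set: X * seq X]) (f x.1 x.2)%:E.

Definition integ (f nu : X -> seq X -> R) : R :=
  fine (esumXS (fun a c => Num.max (f a c * nu a c) 0))
  - fine (esumXS (fun a c => Num.max (- (f a c * nu a c)) 0)).

(* M(X x X^ * ): probability measures with finite mean number of children *)
Definition isProbM (nu : X -> seq X -> R) : Prop :=
  (forall a c, 0 <= nu a c) /\ esumXS nu = 1%E /\
  (esumXS (fun a c => ((size c)%:R * nu a c)%R) < +oo)%E.

(* tilde M(X x X) x M(X x X^ * ) *)
Definition FullSpace : set Pt :=
  [set p | (forall a b, 0 <= p.1 a b) /\ isProbM p.2].

Definition subconsistent (p : Pt) : Prop :=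
  forall a b, ((p.1 a b)%:E >=
    \esum_(c in [set: seq X]) ((count_mem b c)%:R * p.2 a c)%:E)%E.

Definition Ms : set Pt := [set p | FullSpace p /\ subconsistent p].

Definition boundedF (f : X -> seq X -> R) : Prop :=
  exists B : R, forall a c, `|f a c| <= B.

(* basic weak neighbourhood of p given by eps and finitely many bounded test
   functions fs for the second component (coordinates for the first) *)
Definition weakNbhd (p : Pt) (k : nat) (fs : 'I_k -> X -> seq X -> R) (eps : R)
  : set Pt :=
  [set q | (forall a b, `|q.1 a b - p.1 a b| < eps) /\
           (forall i, `|integ (fs i) q.2 - integ (fs i) p.2| < eps)].

Definition openIn (S O : set Pt) : Prop :=
  O `<=` S /\
  forall p, O p -> exists (eps : R) (k : nat) (fs : 'I_k -> X -> seq X -> R),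
    0 < eps /\ (forall i, boundedF (fs i)) /\ (S `&` weakNbhd p fs eps `<=` O).

Definition closedIn (S F : set Pt) : Prop := F `<=` S /\ openIn S (S `\` F).

Definition compactIn (S K : set Pt) : Prop :=
  K `<=` S /\
  forall (I : Type) (U : I -> set Pt), (forall i, openIn S (U i)) ->
    K `<=` \bigcup_(i in [set: I]) U i ->
    exists (k : nat) (g : 'I_k -> I), K `<=` \bigcup_(j in [set: 'I_k]) U (g j).

Definition goodRateIn (S : set Pt) (I : Pt -> \bar R) : Prop :=
  (forall p, S p -> (0 <= I p)%E) /\
  (forall alpha : R, closedIn S [set p | S p /\ (I p <= alpha%:E)%E]) /\
  (forall alpha : R, compactIn S [set p | S p /\ (I p <= alpha%:E)%E]).

Definition mix (t : R) (p q : Pt) : Pt :=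
  (fun a b => t * p.1 a b + (1 - t) * q.1 a b,
   fun a c => t * p.2 a c + (1 - t) * q.2 a c).

Definition convexIn (S : set Pt) (I : Pt -> \bar R) : Prop :=
  forall p q t, S p -> S q -> 0 <= t <= 1 ->
    (I (mix t p q) <= t%:E * I p + (1 - t)%:E * I q)%E.

Definition logE (x : R) : \bar R := if x == 0 then -oo%E else (ln x)%:E.

Definition LDP (S : set Pt) (P : nat -> set Pt -> R) (I : Pt -> \bar R) : Prop :=
  (forall F, closedIn S F ->
     (limn_esup (fun n => (n%:R^-1)%:E * logE (P n F)) <= - ereal_inf (I @` F))%E) /\
  (forall G, openIn S G ->
     (- ereal_inf (I @` G) <= limn_einf (fun n => (n%:R^-1)%:E * logE (P n G)))%E).

Definition nu1 (nu : X -> seq X -> R) (a : X) : R :=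
  fine (\esum_(c in [set: seq X]) (nu a c)%:E).

Definition marg_cond (p : Pt) : Prop :=
  forall b, ((\sum_(a : X) p.1 a b)%:E = \esum_(c in [set: seq X]) (p.2 b c)%:E)%E.

Definition relEnt (nu m : X -> seq X -> R) : \bar R :=
  if `[< forall a c, m a c = 0 -> nu a c = 0 >] then
    let h a c := if nu a c == 0 then 0 else nu a c * ln (nu a c / m a c) in
    (esumXS (fun a c => Num.max (h a c) 0%R)
     - esumXS (fun a c => Num.max (- h a c)%R 0%R))%E
  else +oo%E.

Definition nu1Q (Q : X -> seq X -> R) (nu : X -> seq X -> R) : X -> seq X -> R :=
  fun a c => nu1 nu a * Q a c.

Definition Jtilde (Q : X -> seq X -> R) (p : Pt) : \bar R :=
  if `[< marg_cond p >] then relEnt p.2 (nu1Q Q p.2) else +oo%E.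

Definition Jfull (Q : X -> seq X -> R) (p : Pt) : \bar R :=
  if `[< subconsistent p /\ marg_cond p >] then relEnt p.2 (nu1Q Q p.2)
  else +oo%E.
End Model.

(* An empirical pair (tilde L_X, M_X) is always sub-consistent, indeed consistent:
   every edge of type (a, b) is counted exactly once by its parent, among the
   m(b, C(v)) children of type b of a vertex v of type a.  Hence the conditional
   laws are carried by M_s, and J coincides with tilde J on sub-consistent pairs
   and is +oo elsewhere, so the upper and lower bounds, the level sets and the
   convexity inequality all transfer from M_s to the whole space.  The only
   topological input is that M_s is closed: if varpi(a, b) < sum_c m(b, c) nu(a, c),
   a finite partial sum already exceeds varpi(a, b), and that partial sum is the
   integral of a bounded test function, hence weakly continuous in nu. *)

From Pilot Require Import Defs.
From HB Require Import structures.
From mathcomp Require Import all_boot all_order all_algebra.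
From mathcomp Require Import all_classical all_reals.
From mathcomp Require Import ereal topology sequences esum exp.
From mathcomp Require Import lra.
Import Order.TTheory GRing.Theory Num.Theory.
Local Open Scope classical_set_scope.
Local Open Scope ring_scope.

Lemma In_of_mem (T : eqType) (x : T) (s : seq T) : x \in s -> List.In x s.
Proof.
elim: s => //= y s IHs; rewrite inE => /orP[/eqP ->|/IHs]; [by left|by right].
Qed.

Section ExtendedSums.
Context {R : realType}.

Lemma esum_point (T : choiceType) (t : T) (w : \bar R) : (0 <= w)%E ->
  \esum_(c in [set: T]) (if c == t then w else 0%E) = w.
Proof.
move=> w0; transitivity (\esum_(c in [set t]) w); last exact: esum_set1.
by rewrite [RHS]esum_mkcond; apply: eq_esum => c _; rewrite in_set1.
Qed.

Lemma esumZ_le (T : choiceType) (k : R) (g : T -> \bar R) : 0 <= k ->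
  (forall x, (0 <= g x)%E) ->
  (\esum_(x in [set: T]) (k%:E * g x) <= k%:E * \esum_(x in [set: T]) g x)%E.
Proof.
move=> k0 g0; apply: ge_ereal_sup => _ [A [finA _] <-].
rewrite -ge0_mule_fsumr //; apply: lee_wpmul2l; first by rewrite lee_fin.
by apply: ereal_sup_ubound; exists A.
Qed.

End ExtendedSums.

Section EmpiricalPairs.
Context {R : realType} {X : finType}.

Lemma esum_count_cntM (t : tree X) (a b : X) :
  \esum_(c in [set: seq X]) ((count_mem b c)%:R * (cntM t a c)%:R)%:E
  = ((cntL t a b)%:R)%:E :> \bar R.
Proof.
elim/tree_ind': t => a0 ts IH /=; set m := map (@root_type X) ts.
transitivity (\esum_(c in [set: seq X])
   ((if c == m then (((a0 == a) * count_mem b m)%:R : R)%:E else 0%E) +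
    \sum_(u <- ts) ((count_mem b c)%:R * (cntM u a c)%:R)%:E)%E).
  apply: eq_esum => c _.
  rewrite natrD mulrDr sumnE big_map natr_sum big_distrr EFinD -sumEFin /=.
  congr (_ + _)%E; rewrite (eq_sym m c).
  case: (eqVneq c m) => [->|_]; last by rewrite andbF mulr0.
  by rewrite andbT natrM mulrC.
rewrite esumD; last 2 first.
- by move=> c _; case: ifP.
- by move=> c _; apply: sume_ge0 => u _; rewrite lee_fin mulr_ge0.
rewrite esum_sum; last by move=> c u _ _; rewrite lee_fin mulr_ge0.
rewrite esum_point // big_seq (eq_bigr (fun u => ((cntL u a b)%:R)%:E)); last first.
  by move=> u /In_of_mem /IH.
by rewrite -big_seq sumEFin -EFinD natrD sumnE big_map natr_sum count_map.
Qed.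

Lemma subconsistent_stat (t : tree X) : subconsistent (stat R t).
Proof.
move=> a b /=; set k := (Defs.tsize t)%:R^-1.
have k0 : 0 <= k by rewrite invr_ge0.
rewrite (mulrC _ k) EFinM -esum_count_cntM.
apply: le_trans (esumZ_le _ _ _ k0 _); last by move=> c; rewrite lee_fin mulr_ge0.
by apply: le_esum => c _; rewrite mulrA mulrC EFinM.
Qed.

Lemma condLaw_setI_subconsistent mu Q n (A : set (Pt R X)) :
  condLaw mu Q n A = condLaw mu Q n (A `&` @subconsistent R X).
Proof.
rewrite /condLaw; congr (fine (esum _ _) / _).
apply/seteqP; split=> t /= [size_t At]; do ?split=> //.
- exact: subconsistent_stat.
- by case: At.
Qed.

End EmpiricalPairs.

Section SubspaceTopology.
Context {R : realType} {X : finType}.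
Implicit Types S T F G K : set (Pt R X).

Lemma openIn_setI S T G : T `<=` S -> openIn S G -> openIn T (G `&` T).
Proof.
move=> sTS [_ oG]; split=> [p []//|p [Gp _]].
have [eps [k [fs [eps0 [bd sub]]]]] := oG p Gp.
exists eps, k, fs; split=> //; split=> // q [Tq Nq]; split=> //.
by apply: sub; split=> //; apply: sTS.
Qed.

Lemma closedIn_setI S T F : T `<=` S -> closedIn S F -> closedIn T (F `&` T).
Proof.
move=> sTS [_ [_ oF]]; split=> [p []//|]; split=> [p []//|p [Tp nFp]].
have [|eps [k [fs [eps0 [bd sub]]]]] := oF p.
  by split; [exact: sTS|move=> Fp; apply: nFp].
exists eps, k, fs; split=> //; split=> // q [Tq Nq]; split=> // -[Fq _].
by have [_] := sub q (conj (sTS _ Tq) Nq).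
Qed.

Lemma closedIn_trans S T F : closedIn S T -> closedIn T F -> closedIn S F.
Proof.
move=> [sTS [_ oT]] [sFT [_ oF]]; split=> [p /sFT/sTS//|].
split=> [p []//|p [Sp nFp]].
have [Tp|nTp] := pselect (T p).
  have [eps [k [fs [eps0 [bd sub]]]]] := oF p (conj Tp nFp).
  exists eps, k, fs; split=> //; split=> // q [Sq Nq]; split=> // Fq.
  by have [_] := sub q (conj (sFT _ Fq) Nq).
have [eps [k [fs [eps0 [bd sub]]]]] := oT p (conj Sp nTp).
exists eps, k, fs; split=> //; split=> // q [Sq Nq]; split=> // /sFT.
by have [_] := sub q (conj Sq Nq).
Qed.

Lemma compactIn_subset S T K : T `<=` S -> compactIn T K -> compactIn S K.
Proof.
move=> sTS [sKT cK]; split=> [p /sKT/sTS//|I U oU covU].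
have oUT i : openIn T (U i `&` T) by apply: openIn_setI _ _ _ sTS (oU i).
have [|k [g covg]] := cK I (fun i => U i `&` T) oUT.
  by move=> p Kp; have [i _ Ui] := covU p Kp; exists i => //; split=> //; apply: sKT.
by exists k, g => p /covg [j _ [Uj _]]; exists j.
Qed.

End SubspaceTopology.
Arguments openIn_setI {R X S T G}.
Arguments closedIn_setI {R X S T F}.
Arguments closedIn_trans {R X S T F}.
Arguments compactIn_subset {R X S T K}.

Section Mixtures.
Context {R : realType} {X : finType}.
Implicit Types p q : Pt R X.

Lemma mix0 p q : mix 0 p q = q.
Proof.
by case: q => q1 q2; congr pair; do 2 apply/funext => ?; rewrite mul0r add0r subr0 mul1r.
Qed.

Lemma mix1 p q : mix 1 p q = p.
Proof.
by case: p => p1 p2; congr pair; do 2 apply/funext => ?; rewrite subrr mul0r addr0 mul1r.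
Qed.

End Mixtures.

Section Restriction.
Context {R : realType} {X : finType}.
Variables (S C : set (Pt R X)) (I J : Pt R X -> \bar R).
Hypothesis I_J : forall p, C p -> I p = J p.
Hypothesis I_oo : forall p, ~ C p -> I p = +oo%E.

Lemma ereal_inf_restrict A : ereal_inf (I @` A) = ereal_inf (J @` (A `&` C)).
Proof.
apply/eqP; rewrite eq_le; apply/andP; split.
  apply: le_ereal_inf_tmp => _ [p [Ap Cp] <-].
  by rewrite -I_J //; apply: ereal_inf_lbound; exists p.
apply: le_ereal_inf_tmp => _ [p Ap <-]; have [Cp|nCp] := pselect (C p).
  by rewrite I_J //; apply: ereal_inf_lbound; exists p.
by rewrite I_oo // leey.
Qed.

Lemma restrict_ge0 : (forall p, (S `&` C) p -> (0 <= J p)%E) ->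
  forall p, S p -> (0 <= I p)%E.
Proof.
move=> J0 p Sp; have [Cp|nCp] := pselect (C p); last by rewrite I_oo.
by rewrite I_J //; apply: J0.
Qed.

Lemma level_set_restrict (alpha : R) :
  [set p | S p /\ (I p <= alpha%:E)%E] =
  [set p | (S `&` C) p /\ (J p <= alpha%:E)%E].
Proof.
apply/seteqP; split=> p /= [Sp le_alpha].
  have [Cp|nCp] := pselect (C p); first by split; [|rewrite -I_J].
  by move: le_alpha; rewrite I_oo // leNgt ltry.
by case: Sp => Sp Cp; rewrite I_J.
Qed.

Lemma LDP_restrict (P : nat -> set (Pt R X) -> R) :
  (forall n A, P n A = P n (A `&` C)) -> LDP (S `&` C) P J -> LDP S P I.
Proof.
have SC A : A `<=` S -> A `&` (S `&` C) = A `&` C.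
  by move=> sAS; rewrite setIA (setIidl sAS).
move=> P_C [ldp_closed ldp_open]; split=> [F cF|G oG].
  have := ldp_closed _ (closedIn_setI (@subIsetl _ S C) cF).
  rewrite SC; last by case: cF.
  by rewrite -ereal_inf_restrict; under eq_fun do rewrite -P_C.
have := ldp_open _ (openIn_setI (@subIsetl _ S C) oG).
rewrite SC; last by case: oG.
by rewrite -ereal_inf_restrict; under eq_fun do rewrite -P_C.
Qed.

Lemma goodRateIn_restrict :
  closedIn S (S `&` C) -> goodRateIn (S `&` C) J -> goodRateIn S I.
Proof.
move=> cSC [J0 [cJ kJ]]; split; first exact: restrict_ge0.
split=> alpha; rewrite level_set_restrict.
  exact: closedIn_trans cSC (cJ alpha).
exact: compactIn_subset (@subIsetl _ S C) (kJ alpha).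
Qed.

Lemma convexIn_restrict :
  (forall p q t, S p -> S q -> 0 <= t <= 1 -> C p -> C q -> C (mix t p q)) ->
  (forall p, (S `&` C) p -> (0 <= J p)%E) ->
  convexIn (S `&` C) J -> convexIn S I.
Proof.
move=> C_mix J0 cvxJ p q t Sp Sq t01; have I0 := restrict_ge0 J0.
(* For t = 0 or 1 the other point may lie outside C, with weight 0 and 0 * +oo = 0. *)
have [->|t_neq0] := eqVneq t 0; first by rewrite mix0 mul0e add0e subr0 mul1e.
have [->|t_neq1] := eqVneq t 1; first by rewrite mix1 mul1e subrr mul0e adde0.
have t_gt0 : 0 < t by rewrite lt_neqAle eq_sym t_neq0; case/andP: t01.
have t'_gt0 : 0 < 1 - t by rewrite subr_gt0 lt_neqAle t_neq1; case/andP: t01.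
have scaled_neqNy (r : R) x : 0 < r -> S x -> (r%:E * I x != -oo)%E.
  by move=> r0 Sx; rewrite -ltNye (lt_le_trans ltNy0) // mule_ge0 ?I0 // lee_fin ltW.
have [Cp|nCp] := pselect (C p); have [Cq|nCq] := pselect (C q).
- by rewrite !I_J //; [apply: (cvxJ p q t) | apply: C_mix].
- by rewrite (I_oo q nCq) gt0_muley ?lte_fin // addey ?leey // scaled_neqNy.
- by rewrite (I_oo p nCp) gt0_muley ?lte_fin // addye ?leey // scaled_neqNy.
- by rewrite (I_oo p nCp) gt0_muley ?lte_fin // addye ?leey // scaled_neqNy.
Qed.

End Restriction.
Arguments LDP_restrict {R X S C I J}.
Arguments goodRateIn_restrict {R X S C I J}.
Arguments convexIn_restrict {R X S C I J}.

Section SubConsistency.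
Context {R : realType} {X : finType}.
Implicit Types (p q : Pt R X) (nu : X -> seq X -> R).

Lemma esumXS_supported (g : X -> seq X -> R) (a : X) :
  (forall a' c, 0 <= g a' c) -> (forall a' c, a' != a -> g a' c = 0) ->
  esumXS g = \esum_(c in [set: seq X]) (g a c)%:E.
Proof.
move=> g0 g_a; rewrite /esumXS.
have -> : [set: X * seq X] = [set: X] `*`` (fun _ => [set: seq X]) by apply/seteqP.
rewrite -(esum_esum (a := fun a' c => (g a' c)%:E)); last by move=> *; rewrite lee_fin.
transitivity (\esum_(a' in [set: X])
   (if a' == a then \esum_(c in [set: seq X]) (g a c)%:E else 0%E)).
  apply: eq_esum => a' _; case: eqP => [->//|/eqP neq_a].
  by apply: esum1 => c _; rewrite g_a.
by apply: esum_point; apply: esum_ge0 => *; rewrite lee_fin.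
Qed.

Definition count_test (a b : X) (A : set (seq X)) : X -> seq X -> R :=
  fun a' c => ((a' == a) && (c \in A))%:R * (count_mem b c)%:R.

Lemma count_test_ge0 a b A a' c : 0 <= count_test a b A a' c.
Proof. by rewrite mulr_ge0. Qed.

Lemma count_test_bounded a b A : finite_set A -> boundedF (count_test a b A).
Proof.
move=> finA; exists (\sum_(c \in A) ((count_mem b c)%:R : R)) => a' c.
rewrite ger0_norm ?count_test_ge0 // /count_test.
have sum_ge0 : 0 <= \sum_(c \in A) ((count_mem b c)%:R : R) by apply: fsumr_ge0.
case: (a' == a); case: (boolP (c \in A)) => [/set_mem Ac|_]; rewrite ?mul0r //.
rewrite mul1r (fsbigD1 c) //= lerDl; exact: fsumr_ge0.
Qed.

Lemma integ_count_test a b A nu : finite_set A -> (forall a c, 0 <= nu a c) ->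
  integ (count_test a b A) nu = \sum_(c \in A) (count_mem b c)%:R * nu a c.
Proof.
move=> finA nu0; rewrite /integ.
rewrite [E in _ - fine E]esum1 => [|x _]; last first.
  by rewrite max_r // oppr_le0 mulr_ge0 ?count_test_ge0.
rewrite (esumXS_supported _ a); last 2 first.
- by move=> *; rewrite le_max lexx orbT.
- by move=> a' c /negbTE neq_a; rewrite /count_test neq_a !mul0r maxxx.
rewrite subr0 (eq_esum (b := fun c =>
  if c \in A then ((count_mem b c)%:R * nu a c)%:E else 0%E)); last first.
  move=> c _; rewrite max_l ?mulr_ge0 ?count_test_ge0 // /count_test eqxx /=.
  by case: (c \in A); rewrite ?mul1r ?mul0r.
by rewrite -esum_mkcond esum_fset // => [|c _]; rewrite ?fsumEFin // lee_fin mulr_ge0.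
Qed.

Lemma not_subconsistent_open p : @FullSpace R X p -> ~ subconsistent p ->
  exists (eps : R) (k : nat) (fs : 'I_k -> X -> seq X -> R),
    0 < eps /\ (forall i, boundedF (fs i)) /\
    @FullSpace R X `&` weakNbhd p fs eps `<=` [set q | ~ subconsistent q].
Proof.
move=> [_ [p0 _]] /existsNP [a /existsNP [b /negP]]; rewrite -ltNge.
move=> /ereal_sup_gt [_ [A [finA _] <-]]; rewrite fsumEFin // lte_fin => lt_pA.
set d := \sum_(c \in A) (count_mem b c)%:R * p.2 a c - p.1 a b.
exists (d / 2), 1, (fun _ => count_test a b A).
split; first by rewrite divr_gt0 // subr_gt0.
split=> [_|q [[_ [q0 _]] [near_q1 near_q2]] sub_q]; first exact: count_test_bounded.
have lt_qA : q.1 a b < \sum_(c \in A) (count_mem b c)%:R * q.2 a c.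
  move: (near_q1 a b) (near_q2 ord0); rewrite !integ_count_test //.
  rewrite !ltr_norml /d => /andP[lo1 hi1] /andP[lo2 hi2].
  by clear -lo1 hi1 lo2 hi2; lra.
have : ((\sum_(c \in A) (count_mem b c)%:R * q.2 a c)%:E <=
    \esum_(c in [set: seq X]) ((count_mem b c)%:R * q.2 a c)%:E)%E.
  by apply: esum_ge; exists A => //; rewrite fsumEFin.
by move=> /le_trans /(_ (sub_q a b)); rewrite lee_fin leNgt lt_qA.
Qed.

Lemma closedIn_Ms : closedIn (@FullSpace R X) (@Ms R X).
Proof.
split=> [p []//|]; split=> [p []//|p [Fp nMp]].
have [|eps [k [fs [eps0 [bd sub]]]]] := not_subconsistent_open _ Fp.
  by move=> sub_p; apply: nMp.
exists eps, k, fs; do 2 split=> //.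
by move=> q [Fq Nq]; split=> // -[_]; apply: sub.
Qed.

Lemma subconsistent_mix p q (t : R) :
  (forall a c, 0 <= p.2 a c) -> (forall a c, 0 <= q.2 a c) -> 0 <= t <= 1 ->
  subconsistent p -> subconsistent q -> subconsistent (mix t p q).
Proof.
move=> p0 q0 /andP[t0 t1] sub_p sub_q a b /=.
have t'0 : 0 <= 1 - t by rewrite subr_ge0.
pose mp c := ((count_mem b c)%:R * p.2 a c)%:E.
pose mq c := ((count_mem b c)%:R * q.2 a c)%:E.
rewrite (eq_esum (b := fun c => t%:E * mp c + (1 - t)%:E * mq c)%E); last first.
  by move=> c _; rewrite -!EFinM -EFinD mulrDr !mulrA (mulrC _ t) (mulrC _ (1 - t)).
rewrite esumD => [|c _|c _]; last 2 first.
- by rewrite mule_ge0 ?lee_fin ?mulr_ge0.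
- by rewrite mule_ge0 ?lee_fin ?mulr_ge0.
rewrite (EFinD (t * _)) (EFinM t) (EFinM (1 - t)); apply: leeD.
- apply: le_trans (esumZ_le _ _ _ t0 _) _; first by move=> c; rewrite lee_fin mulr_ge0.
  by rewrite lee_wpmul2l ?lee_fin // sub_p.
- apply: le_trans (esumZ_le _ _ _ t'0 _) _; first by move=> c; rewrite lee_fin mulr_ge0.
  by rewrite lee_wpmul2l ?lee_fin // sub_q.
Qed.

End SubConsistency.

Section RateFunctions.
Context {R : realType} {X : finType}.
Implicit Types p : Pt R X.

Lemma Jfull_subconsistent Q p : subconsistent p -> Jfull Q p = Jtilde Q p.
Proof.
move=> sub_p; rewrite /Jfull /Jtilde.
case: (asboolP (marg_cond p)) => m_p; first by rewrite asboolT.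
by rewrite asboolF // => -[].
Qed.

Lemma Jfull_not_subconsistent Q p : ~ subconsistent p -> Jfull Q p = +oo%E.
Proof. by move=> nsub_p; rewrite /Jfull asboolF // => -[]. Qed.

End RateFunctions.

Theorem lemma3p2 (R : realType) (X : finType) (mu : X -> R) (Q : X -> seq X -> R)
  (mu_ge0 : forall a, 0 <= mu a) (mu_sum1 : \sum_(a : X) mu a = 1)
  (Q_ge0 : forall a c, 0 <= Q a c)
  (Q_sum1 : forall a, \esum_(c in [set: seq X]) (Q a c)%:E = 1%E) :
  LDP (@Ms R X) (condLaw mu Q) (Jtilde Q) ->
  goodRateIn (@Ms R X) (Jtilde Q) -> convexIn (@Ms R X) (Jtilde Q) ->
  LDP (@FullSpace R X) (condLaw mu Q) (Jfull Q) /\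
  goodRateIn (@FullSpace R X) (Jfull Q) /\ convexIn (@FullSpace R X) (Jfull Q).
Proof.
move=> ldp good cvx.
have J_sub := @Jfull_subconsistent R X Q.
have J_oo := @Jfull_not_subconsistent R X Q.
split; first exact: LDP_restrict J_sub J_oo _ (condLaw_setI_subconsistent mu Q) ldp.
split; first exact: goodRateIn_restrict J_sub J_oo closedIn_Ms good.
apply: convexIn_restrict J_sub J_oo _ good.1 cvx => p q t [_ [p0 _]] [_ [q0 _]].
exact: subconsistent_mix.
Qed.
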